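(* Let $\mathcal{G}=(G,(m,r))$ be a mutant-biased fitness graph. Then the fixation probability is submodular: for all $S,T\subseteq V$, \[ \operatorname{fp}_{\mathcal{G}}(S)+\operatorname{fp}_{\mathcal{G}}(T)\ge\operatorname{fp}_{\mathcal{G}}(S\cup T)+\operatorname{fp}_{\mathcal{G}}(S\cap T). \]
   Context: A fitness graph is $\mathcal{G}=(G,(m,r))$ where $G=(V,E,w)$ is a strongly connected directed graph, $w(u,\cdot)$ is a probability distribution over out-neighbours of $u$, and $r,m\colon V\to(0,\infty)$; it is mutant-biased if $m(u)\ge r(u)$ for all $u$. For a configuration (set of mutants) $X\subseteq V$, $f_X(u)=m(u)$ if $u\in X$, else $r(u)$. The Heterogeneous Moran process starts at $\mathcal{X}_0=S$; from $\mathcal{X}_t=X$ it picks $u$ with probability $f_X(u)/\sum_v f_X(v)$, then $v$ with probability $w(u,v)$, and $v$ takes the type of $u$. $\operatorname{fp}_{\mathcal{G}}(S)$ is the probability that the process eventually reaches $V$ (with $\operatorname{fp}_{\mathcal{G}}(\emptyset)=0$). *)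

From HB Require Import structures.
From mathcomp Require Import all_boot all_order all_algebra.
From mathcomp Require Import all_classical all_reals all_analysis.
Set Implicit Arguments. Unset Strict Implicit. Unset Printing Implicit Defensive.
Import Order.TTheory GRing.Theory Num.Theory.
Import numFieldNormedType.Exports.
Local Open Scope ring_scope.

Section Moran.
Variables (R : realType) (V : finType).

Definition fitness_graph (E : rel V) (w : V -> V -> R) (m r : V -> R) : Prop :=
  (forall u v, connect E u v) /\
  (forall u v, E u v -> 0 < w u v) /\
  (forall u v, ~~ E u v -> w u v = 0) /\
  (forall u, \sum_(v : V) w u v = 1) /\
  (forall u, 0 < r u) /\ (forall u, 0 < m u).

Definition mutant_biased (m r : V -> R) : Prop := forall u, r u <= m u.

Variables (w : V -> V -> R) (m r : V -> R).

Definition fit (X : {set V}) (u : V) : R := if u \in X then m u else r u.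

(* new configuration after u reproduces onto v *)
Definition step_cfg (X : {set V}) (u v : V) : {set V} :=
  if u \in X then v |: X else X :\ v.

(* reach_prob t X = probability that the process started at X reaches the
   configuration V (= [set: V]) within t steps. *)
Fixpoint reach_prob (t : nat) (X : {set V}) : R :=
  if X == [set: V] then 1 else
  match t with
  | 0 => 0
  | t'.+1 =>
      \sum_(u : V) \sum_(v : V)
         (fit X u / \sum_(x : V) fit X x) * w u v * reach_prob t' (step_cfg X u v)
  end.

(* Fixation probability: probability of eventually reaching V,
   with fp(emptyset) = 0 by convention. *)
Definition fp (S : {set V}) : R :=
  if S == finset.set0 then 0 else limn (fun t => reach_prob t S).

End Moran.

(* Since m >= r, the Moran process can be uniformised into a lazy chain with
   the same absorption behaviour in which every move is a union-preserving map
   on configurations; hence its transition operator L preserves monotone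
   submodular set functions.  The iterates of L on the indicator of nonempty
   configurations are monotone submodular upper bounds for fp.  They exceed
   the lower bounds L^t (1_{X = V}) by L^t applied to the indicator of
   transient configurations, which decays geometrically because strong
   connectivity lets every transient configuration move towards V with
   positive probability.  Submodularity passes to the limit. *)

From HB Require Import structures.
From mathcomp Require Import all_boot all_order all_algebra.
From mathcomp Require Import all_classical all_reals all_analysis.
From mathcomp Require Import ring lra.
Set Implicit Arguments. Unset Strict Implicit. Unset Printing Implicit Defensive.
Import Order.TTheory GRing.Theory Num.Theory.
Import numFieldNormedType.Exports.
Local Open Scope ring_scope.

Local Notation set0 := finset.set0.

Lemma natr_bool_01 {R : numDomainType} (b : bool) : 0 <= (b%:R : R) <= 1.
Proof. by case: b; rewrite ?lexx ?ler01. Qed.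

Lemma ltr_sum_one (R : numDomainType) (I : finType) (F G : I -> R) i :
  (forall j, F j <= G j) -> F i < G i -> \sum_j F j < \sum_j G j.
Proof.
move=> FG FGi; rewrite (bigD1 i) // [ltRHS](bigD1 i) //=.
by rewrite ltr_leD // ler_sum.
Qed.

Lemma ler0_geometric (R : realType) (x b : R) :
  0 <= b < 1 -> (forall k, x <= b ^+ k) -> x <= 0.
Proof.
move=> /andP[b_ge0 b_lt1] x_le; apply: (cvgr_to_ge (cvg_expr _)); last exact: nearW.
by rewrite ger0_norm.
Qed.

Section MonotoneSubmodular.
Variables (V : finType) (R : realDomainType).
Implicit Types (f g : {set V} -> R) (X Y : {set V}).

Definition submodular f := forall X Y, f (X :|: Y) + f (X :&: Y) <= f X + f Y.

Definition monotone_submodular f :=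
  {homo f : X Y / X \subset Y >-> X <= Y} /\ submodular f.

Lemma monotone_submodular_comp f (s : {set V} -> {set V}) :
  {morph s : X Y / X :|: Y} -> monotone_submodular f ->
  monotone_submodular (f \o s).
Proof.
move=> sU [f_homo f_sub].
have s_homo : {homo s : X Y / X \subset Y}.
  by move=> X Y /finset.setUidPr sXY; rewrite -sXY sU finset.subsetUl.
split=> [X Y /s_homo/f_homo //|X Y /=].
rewrite sU; apply: le_trans (f_sub (s X) (s Y)); rewrite lerD2l f_homo //.
by rewrite finset.subsetI !s_homo ?finset.subsetIl ?finset.subsetIr.
Qed.

Lemma monotone_submodular_scale c f : 0 <= c ->
  monotone_submodular f -> monotone_submodular (fun X => c * f X).
Proof.
move=> c_ge0 [f_homo f_sub]; split=> [X Y /f_homo|X Y]; first exact: ler_wpM2l.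
by rewrite -!mulrDr ler_wpM2l.
Qed.

Lemma monotone_submodular_add f g :
  monotone_submodular f -> monotone_submodular g ->
  monotone_submodular (fun X => f X + g X).
Proof.
move=> [f_homo f_sub] [g_homo g_sub]; split=> [X Y sXY|X Y].
  by rewrite lerD ?f_homo ?g_homo.
by have := f_sub X Y; have := g_sub X Y; lra.
Qed.

Lemma monotone_submodular_sum (I : finType) (F : I -> {set V} -> R) :
  (forall i, monotone_submodular (F i)) ->
  monotone_submodular (fun X => \sum_i F i X).
Proof.
move=> F_ms; split=> [X Y sXY|X Y].
  by apply: ler_sum => i _; apply: (F_ms i).1.
by rewrite -!big_split; apply: ler_sum => i _; apply: (F_ms i).2.
Qed.

Lemma monotone_submodular_nonempty :
  monotone_submodular (fun X => (X != set0)%:R).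
Proof.
split=> [X Y sXY|X Y] /=.
  have [_|X0] := eqVneq X set0; first exact: ler0n.
  suff Y0 : Y != set0 by rewrite Y0.
  by apply: contraNneq X0 => Y0; rewrite -finset.subset0 -Y0.
rewrite -!natrD ler_nat.
have [->|X0] := eqVneq X set0; first by rewrite finset.set0U finset.set0I eqxx addn0.
have [->|Y0] := eqVneq Y set0; first by rewrite finset.setU0 finset.setI0 X0 eqxx.
exact: leq_add (leq_b1 _) (leq_b1 _).
Qed.

End MonotoneSubmodular.

Section Configurations.
Variable V : finType.
Implicit Types (X Y : {set V}) (u v : V).

Definition spread_cfg X u v : {set V} := if u \in X then v |: X else X.

Definition absorbing X := forall u v, step_cfg X u v = X.

Lemma step_cfgU u v : {morph (fun X => step_cfg X u v) : X Y / X :|: Y}.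
Proof.
move=> X Y; rewrite /step_cfg inE.
by case: (u \in X); case: (u \in Y); apply/setP => z;
  rewrite !inE; case: (z == v); rewrite ?orbT.
Qed.

Lemma spread_cfgU u v : {morph (fun X => spread_cfg X u v) : X Y / X :|: Y}.
Proof.
move=> X Y; rewrite /spread_cfg inE.
by case: (u \in X); case: (u \in Y); apply/setP => z;
  rewrite !inE; case: (z == v); rewrite ?orbT.
Qed.

Lemma absorbing_spread_cfg X u v : absorbing X -> spread_cfg X u v = X.
Proof. by move/(_ u v); rewrite /spread_cfg /step_cfg; case: ifP. Qed.

Lemma absorbing_setT : absorbing [set: V].
Proof. by move=> u v; rewrite /step_cfg inE finset.setUT. Qed.

Lemma absorbing_set0 : absorbing set0.
Proof. by move=> u v; rewrite /step_cfg inE finset.set0D. Qed.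

End Configurations.

#[local] Hint Resolve absorbing_setT absorbing_set0 : core.

Section LazyChain.
Variables (R : realType) (V : finType) (w : V -> V -> R) (m r : V -> R).
Hypotheses (w_ge0 : forall u v, 0 <= w u v) (w_sum1 : forall u, \sum_v w u v = 1).
Hypotheses (r_gt0 : forall u, 0 < r u) (r_le_m : forall u, r u <= m u).
Variable v0 : V.
Implicit Types (f g : {set V} -> R) (X Y : {set V}).

Local Notation total_fit X := (\sum_x fit m r X x).
Local Notation M := (\sum_x m x).

Lemma setT_neq0 : [set: V] != set0.
Proof. by apply/set0Pn; exists v0. Qed.

Lemma fit_gt0 X u : 0 < fit m r X u.
Proof. by rewrite /fit; case: ifP => // _; apply: lt_le_trans (r_le_m u). Qed.

Lemma fit_le_m X u : fit m r X u <= m u.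
Proof. by rewrite /fit; case: ifP. Qed.

Lemma total_fit_gt0 X : 0 < total_fit X.
Proof.
rewrite (bigD1 v0) //= ltr_pwDl ?fit_gt0 // sumr_ge0 // => u _.
exact/ltW/fit_gt0.
Qed.

Lemma total_m_gt0 : 0 < M.
Proof.
by apply: lt_le_trans (total_fit_gt0 set0) _; apply: ler_sum => u _; apply: fit_le_m.
Qed.

(* One step of the lazy chain: [u] fires with probability [m u / M] and
   targets [v] with probability [w u v]; it then performs the Moran move with
   probability [r u / m u], and otherwise spreads only if it is a mutant. *)
Definition lazy_op f X : R :=
  M^-1 * \sum_u \sum_v
    w u v * (r u * f (step_cfg X u v) + (m u - r u) * f (spread_cfg X u v)).

Definition moran_op f X : R :=
  \sum_u \sum_v fit m r X u / total_fit X * w u v * f (step_cfg X u v).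

Definition move_rate X : R := total_fit X / M.

Lemma move_rate_gt0 X : 0 < move_rate X.
Proof. by rewrite divr_gt0 ?total_fit_gt0 ?total_m_gt0. Qed.

Lemma move_rate_le1 X : move_rate X <= 1.
Proof.
rewrite ler_pdivrMr ?total_m_gt0 // mul1r.
by apply: ler_sum => u _; apply: fit_le_m.
Qed.

Lemma ler_moran_op f g X :
  (forall Y, f Y <= g Y) -> moran_op f X <= moran_op g X.
Proof.
move=> fg; rewrite /moran_op; do 2!(apply: ler_sum => ? _); rewrite ler_wpM2l //.
by rewrite mulr_ge0 ?divr_ge0 // ltW ?fit_gt0 ?total_fit_gt0.
Qed.

Lemma moran_op_ge0 f X : (forall Y, 0 <= f Y) -> 0 <= moran_op f X.
Proof.
move=> f_ge0; rewrite /moran_op; do 2!(apply: sumr_ge0 => ? _).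
by rewrite !mulr_ge0 ?invr_ge0 // ltW ?fit_gt0 ?total_fit_gt0.
Qed.

Lemma eq_lazy_op f g X : f =1 g -> lazy_op f X = lazy_op g X.
Proof.
by move=> fg; congr (_ * _); apply: eq_bigr => u _; apply: eq_bigr => v _; rewrite !fg.
Qed.

Lemma ler_lazy_move f g X u v : (forall Y, f Y <= g Y) ->
  w u v * (r u * f (step_cfg X u v) + (m u - r u) * f (spread_cfg X u v)) <=
  w u v * (r u * g (step_cfg X u v) + (m u - r u) * g (spread_cfg X u v)).
Proof. by move=> fg; rewrite ler_wpM2l // lerD // ler_wpM2l ?subr_ge0 // ltW. Qed.

Lemma ler_lazy_op f g X :
  (forall Y, f Y <= g Y) -> lazy_op f X <= lazy_op g X.
Proof.
move=> fg; rewrite /lazy_op ler_wpM2l // ?invr_ge0 ?(ltW total_m_gt0) //.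
by do 2!(apply: ler_sum => ? _); apply: ler_lazy_move.
Qed.

Lemma ltr_lazy_op f g X u v :
  (forall Y, f Y <= g Y) -> u \in X -> 0 < w u v -> f (v |: X) < g (v |: X) ->
  lazy_op f X < lazy_op g X.
Proof.
move=> fg uX w_gt0 fg_lt; rewrite /lazy_op ltr_pM2l ?invr_gt0 ?total_m_gt0 //.
apply: (ltr_sum_one (i := u)) => [u'|]; last apply: (ltr_sum_one (i := v)) => [v'|].
- by apply: ler_sum => v' _; apply: ler_lazy_move.
- exact: ler_lazy_move.
rewrite /step_cfg /spread_cfg uX ltr_pM2l // ltr_leD ?ltr_pM2l //.
by rewrite ler_wpM2l ?subr_ge0 // ltW.
Qed.

Lemma lazy_opD f g X :
  lazy_op (fun Y => f Y + g Y) X = lazy_op f X + lazy_op g X.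
Proof.
rewrite /lazy_op -mulrDr -big_split; congr (_ * _); apply: eq_bigr => u _.
by rewrite -big_split; apply: eq_bigr => v _ /=; ring.
Qed.

Lemma lazy_opZ c f X : lazy_op (fun Y => c * f Y) X = c * lazy_op f X.
Proof.
rewrite /lazy_op mulrCA; congr (_ * _); rewrite mulr_sumr; apply: eq_bigr => u _.
by rewrite mulr_sumr; apply: eq_bigr => v _; ring.
Qed.

Lemma lazy_op_const c X : lazy_op (fun=> c) X = c.
Proof.
have move_const u : \sum_v w u v * (r u * c + (m u - r u) * c) = m u * c.
  by rewrite -mulr_suml w_sum1 mul1r -mulrDl addrC subrK.
rewrite /lazy_op (eq_bigr _ (fun u _ => move_const u)) -mulr_suml.
by rewrite mulKf // gt_eqF ?total_m_gt0.
Qed.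

Lemma lazy_op_absorbing f X : absorbing X -> lazy_op f X = f X.
Proof.
move=> X_abs; rewrite -[RHS](lazy_op_const (f X) X); congr (_ * _).
by apply: eq_bigr => u _; apply: eq_bigr => v _; rewrite absorbing_spread_cfg ?X_abs.
Qed.

Lemma lazy_opE f X : lazy_op f X = f X + move_rate X * (moran_op f X - f X).
Proof.
have lazy_move u v : r u * f (step_cfg X u v) + (m u - r u) * f (spread_cfg X u v) =
    fit m r X u * f (step_cfg X u v) + (m u - fit m r X u) * f X.
  by rewrite /fit /spread_cfg /step_cfg; case: ifP => _; ring.
have moves : \sum_u \sum_v fit m r X u * w u v * f (step_cfg X u v) =
    total_fit X * moran_op f X.
  rewrite /moran_op mulr_sumr; apply: eq_bigr => u _.
  rewrite mulr_sumr; apply: eq_bigr => v _.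
  by field; rewrite gt_eqF ?total_fit_gt0.
have split_move u :
    \sum_v w u v * (r u * f (step_cfg X u v) + (m u - r u) * f (spread_cfg X u v)) =
    \sum_v fit m r X u * w u v * f (step_cfg X u v) + (m u - fit m r X u) * f X.
  transitivity (\sum_v (fit m r X u * w u v * f (step_cfg X u v) +
                        w u v * ((m u - fit m r X u) * f X))).
    by apply: eq_bigr => v _; rewrite lazy_move; ring.
  by rewrite big_split /= -mulr_suml w_sum1 mul1r.
rewrite /lazy_op /move_rate (eq_bigr _ (fun u _ => split_move u)) big_split /= moves.
rewrite -mulr_suml sumrB.
by field; rewrite gt_eqF ?total_m_gt0.
Qed.

Lemma monotone_submodular_lazy_op f :
  monotone_submodular f -> monotone_submodular (lazy_op f).
Proof.
move=> f_ms; apply: monotone_submodular_scale; first by rewrite invr_ge0 ltW ?total_m_gt0.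
apply: monotone_submodular_sum => u; apply: monotone_submodular_sum => v.
apply: monotone_submodular_scale (w_ge0 u v) _.
apply: monotone_submodular_add; apply: monotone_submodular_scale.
- exact: ltW.
- exact: monotone_submodular_comp (step_cfgU u v) f_ms.
- by rewrite subr_ge0.
- exact: monotone_submodular_comp (spread_cfgU u v) f_ms.
Qed.

Lemma eq_iter_lazy_op t f g : f =1 g -> iter t lazy_op f =1 iter t lazy_op g.
Proof. by move=> fg; elim: t => [|t IH] X //=; apply: eq_lazy_op. Qed.

Lemma ler_iter_lazy_op t f g :
  (forall Y, f Y <= g Y) -> forall X, iter t lazy_op f X <= iter t lazy_op g X.
Proof. by move=> fg; elim: t => [|t IH] X //=; apply: ler_lazy_op. Qed.

Lemma iter_lazy_opD t f g X :
  iter t lazy_op (fun Y => f Y + g Y) X = iter t lazy_op f X + iter t lazy_op g X.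
Proof. by elim: t X => [|t IH] X //=; rewrite -lazy_opD; apply: eq_lazy_op. Qed.

Lemma iter_lazy_opZ t c f X :
  iter t lazy_op (fun Y => c * f Y) X = c * iter t lazy_op f X.
Proof. by elim: t X => [|t IH] X //=; rewrite -lazy_opZ; apply: eq_lazy_op. Qed.

Lemma iter_lazy_op_absorbing t f X : absorbing X -> iter t lazy_op f X = f X.
Proof. by move=> X_abs; elim: t => [|t IH] //=; rewrite lazy_op_absorbing. Qed.

Lemma iter_lazy_op_01 t f :
  (forall Y, 0 <= f Y <= 1) -> forall X, 0 <= iter t lazy_op f X <= 1.
Proof.
move=> f01; elim: t => [|t IH] X //=; apply/andP; split.
  by rewrite -[leLHS](lazy_op_const 0 X) ler_lazy_op // => Y; case/andP: (IH Y).
by rewrite -[leRHS](lazy_op_const 1 X) ler_lazy_op // => Y; case/andP: (IH Y).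
Qed.

Lemma monotone_submodular_iter_lazy_op t f :
  monotone_submodular f -> monotone_submodular (iter t lazy_op f).
Proof. by move=> f_ms; elim: t => [|t IH] //=; apply: monotone_submodular_lazy_op. Qed.

Local Notation reach := (reach_prob w m r).

Lemma reach_probS t X : X != [set: V] -> reach t.+1 X = moran_op (reach t) X.
Proof. by move=> XT; rewrite /= (negbTE XT). Qed.

Lemma reach_prob_setT t : reach t [set: V] = 1.
Proof. by case: t => [|t] /=; rewrite eqxx. Qed.

Lemma reach_prob_ge0 t X : 0 <= reach t X.
Proof.
elim: t X => [|t IH] X; first by rewrite /=; case: ifP.
have [->|XT] := eqVneq X [set: V]; first by rewrite reach_prob_setT.
by rewrite reach_probS // moran_op_ge0.
Qed.

Lemma reach_prob_nondecreasing t X : reach t X <= reach t.+1 X.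
Proof.
elim: t X => [|t IH] X; have [->|XT] := eqVneq X [set: V];
  rewrite ?reach_prob_setT // reach_probS //.
  have -> : reach 0 X = 0 by rewrite /= (negbTE XT).
  by rewrite moran_op_ge0 // => Y; apply: reach_prob_ge0.
by rewrite reach_probS //; apply: ler_moran_op.
Qed.

Definition transient X : R := ((X != set0) && (X != [set: V]))%:R.

Definition upper_bound t := iter t lazy_op (fun X => (X != set0)%:R).

Definition lower_bound t := iter t lazy_op (reach 0).

Definition gap t := iter t lazy_op transient.

Lemma upper_boundE t X : upper_bound t X = lower_bound t X + gap t X.
Proof.
rewrite -iter_lazy_opD; apply: eq_iter_lazy_op => Y /=.
rewrite /transient; have [->|YT] := eqVneq Y [set: V].
  by rewrite setT_neq0 andbF addr0.
by rewrite andbT add0r.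
Qed.

Lemma monotone_submodular_upper_bound t : monotone_submodular (upper_bound t).
Proof. exact/monotone_submodular_iter_lazy_op/monotone_submodular_nonempty. Qed.

Lemma upper_bound_01 t X : 0 <= upper_bound t X <= 1.
Proof. by apply: iter_lazy_op_01 => Y; apply: natr_bool_01. Qed.

Lemma gap_01 t X : 0 <= gap t X <= 1.
Proof. by apply: iter_lazy_op_01 => Y; apply: natr_bool_01. Qed.

Lemma gap_set0 t : gap t set0 = 0.
Proof. by rewrite /gap iter_lazy_op_absorbing // /transient eqxx. Qed.

Lemma gap_setT t : gap t [set: V] = 0.
Proof. by rewrite /gap iter_lazy_op_absorbing // /transient eqxx andbF. Qed.

Lemma lower_bound_le_reach t X : lower_bound t X <= reach t X.
Proof.
elim: t X => [|t IH] X //; rewrite /lower_bound iterS -/(lower_bound t).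
have [->|XT] := eqVneq X [set: V].
  rewrite lazy_op_absorbing //.
  by apply: le_trans (IH _) _; rewrite !reach_prob_setT.
apply: le_trans (ler_lazy_op _ IH) _; rewrite lazy_opE -reach_probS //.
have := reach_prob_nondecreasing t X; have := move_rate_le1 X.
have := move_rate_gt0 X; nra.
Qed.

Lemma upper_bound_nonincreasing t X : upper_bound t.+1 X <= upper_bound t X.
Proof.
elim: t X => [|t IH] X; last exact: ler_lazy_op IH.
have [->|X0] := eqVneq X set0; first by rewrite /= lazy_op_absorbing.
rewrite /= X0 -[leRHS](lazy_op_const 1 X); apply: ler_lazy_op => Y.
by case/andP: (natr_bool_01 (R := R) (Y != set0)).
Qed.

Lemma moran_op_upper_bound t X : moran_op (upper_bound t) X <= upper_bound t X.
Proof.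
have := upper_bound_nonincreasing t X.
by rewrite [upper_bound t.+1 X]/= lazy_opE gerDl pmulr_rle0 ?move_rate_gt0 // subr_le0.
Qed.

Lemma reach_le_upper_bound s t X : reach s X <= upper_bound t X.
Proof.
have upper_setT : upper_bound t [set: V] = 1.
  by rewrite /upper_bound iter_lazy_op_absorbing //= setT_neq0.
elim: s X => [|s IH] X; have [->|XT] := eqVneq X [set: V];
  rewrite ?reach_prob_setT ?upper_setT //.
  by rewrite /= (negbTE XT); case/andP: (upper_bound_01 t X).
rewrite reach_probS //; apply: le_trans (moran_op_upper_bound t X).
exact: ler_moran_op.
Qed.

Lemma fp_sandwich t X : upper_bound t X - gap t X <= fp w m r X <= upper_bound t X.
Proof.
rewrite [upper_bound t X in leLHS]upper_boundE addrK /fp.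
have [->|X0] := eqVneq X set0.
  rewrite /upper_bound /lower_bound !iter_lazy_op_absorbing //=.
  by rewrite eq_sym (negbTE setT_neq0) eqxx lexx.
have reach_nd : nondecreasing_seq (reach ^~ X).
  by apply/nondecreasing_seqP => n; apply: reach_prob_nondecreasing.
have reach_cvg : cvgn (reach ^~ X).
  apply: nondecreasing_is_cvgn reach_nd _; exists 1 => _ [n _ <-].
  apply: le_trans (reach_le_upper_bound n 0 X) _.
  by case/andP: (upper_bound_01 0 X).
apply/andP; split.
  exact: le_trans (lower_bound_le_reach t X) (nondecreasing_cvgn_le reach_nd reach_cvg t).
by apply: limr_le reach_cvg _; apply: nearW => n; apply: reach_le_upper_bound.
Qed.

Section StronglyConnected.
Variable E : rel V.
Hypotheses (w_edge_gt0 : forall u v, E u v -> 0 < w u v)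
  (E_connected : forall u v, connect E u v).

Lemma exists_boundary_edge X : X != set0 -> X != [set: V] ->
  exists u v, [/\ u \in X, v \notin X & E u v].
Proof.
move=> /set0Pn[x xX] XT.
have [[u v] /and3P[uX vX Euv]|no_edge] :=
  pickP (fun uv : V * V => [&& uv.1 \in X, uv.2 \notin X & E uv.1 uv.2]).
  by exists u, v.
have E_sym : connect_sym E by move=> a b; rewrite !E_connected.
have X_closed : fingraph.closed E X.
  apply: (intro_closed E_sym) => a b Eab aX.
  by apply: contraFT (no_edge (a, b)) => bX; rewrite /= aX bX Eab.
have /subsetPn[y _ yX] : ~~ ([set: V] \subset X) by rewrite finset.subTset.
by move: yX; rewrite -(closed_connect X_closed (E_connected x y)) xX.
Qed.

(* Each lazy step can add a boundary vertex, so [t] steps can fill the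
   [#|V| - #|X|] missing vertices. *)
Lemma gap_lt1 t X : X != set0 -> (#|V| <= t + #|X|)%N -> gap t X < 1.
Proof.
elim: t X => [|t IH] X X0 cardX; have [->|XT] := eqVneq X [set: V];
  rewrite ?gap_setT ?ltr01 //.
  by move: XT; rewrite finset.eqEcard finset.subsetT cardsT -(add0n #|X|) cardX.
have [u [v [uX vX Euv]]] := exists_boundary_edge X0 XT.
rewrite /gap iterS -[ltRHS](lazy_op_const 1 X).
apply: (ltr_lazy_op _ uX (w_edge_gt0 Euv)) => [Y|]; first by case/andP: (gap_01 t Y).
apply: IH; first by apply/set0Pn; exists v; rewrite finset.setU11.
by rewrite cardsU1 vX add1n addnS -addSn.
Qed.

Lemma gap_contraction :
  exists2 b, 0 <= b < 1 & forall X, gap #|V| X <= b * transient X.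
Proof.
exists (\big[Num.max/0]_X gap #|V| X).
  apply/andP; split; first exact: bigmax_ge_id.
  apply: bigmax_lt => [|X _]; first exact: ltr01.
  have [->|X0] := eqVneq X set0; first by rewrite gap_set0 ltr01.
  by apply: gap_lt1; rewrite ?leq_addr.
move=> X; have [->|X0] := eqVneq X set0; first by rewrite gap_set0 /transient eqxx mulr0.
have [->|XT] := eqVneq X [set: V]; first by rewrite gap_setT /transient eqxx andbF mulr0.
by rewrite /transient X0 XT mulr1; apply: le_bigmax.
Qed.

Lemma gap_geometric b k X : 0 <= b ->
  (forall Y, gap #|V| Y <= b * transient Y) -> gap (k * #|V|) X <= b ^+ k.
Proof.
move=> b_ge0 gapN.
suff gap_le Y : gap (k * #|V|) Y <= b ^+ k * transient Y.
  apply: le_trans (gap_le X) _; rewrite -[leRHS]mulr1 ler_wpM2l ?exprn_ge0 //.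
  by case/andP: (natr_bool_01 (R := R) ((X != set0) && (X != [set: V]))).
elim: k Y => [|k IH] Y; first by rewrite mul0n expr0 mul1r.
rewrite mulSn /gap iterD; apply: le_trans (ler_iter_lazy_op _ IH Y) _.
by rewrite iter_lazy_opZ exprSr -mulrA ler_wpM2l ?exprn_ge0 ?gapN.
Qed.

Theorem fp_submodular : submodular (fp w m r).
Proof.
have [b /[dup] b01 /andP[b_ge0 _] gapN] := gap_contraction.
move=> S T.
suff excess_le k : (fp w m r (S :|: T) + fp w m r (S :&: T) -
                    (fp w m r S + fp w m r T)) / 2 <= b ^+ k.
  by have := ler0_geometric b01 excess_le; lra.
have /andP[_ fpU] := fp_sandwich (k * #|V|) (S :|: T).
have /andP[_ fpI] := fp_sandwich (k * #|V|) (S :&: T).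
have /andP[fpS _] := fp_sandwich (k * #|V|) S.
have /andP[fpT _] := fp_sandwich (k * #|V|) T.
have := (monotone_submodular_upper_bound (k * #|V|)).2 S T.
have := gap_geometric k S b_ge0 gapN; have := gap_geometric k T b_ge0 gapN.
lra.
Qed.

End StronglyConnected.

End LazyChain.

Theorem lemma6 (R : realType) (V : finType) (E : rel V) (w : V -> V -> R)
  (m r : V -> R) :
  fitness_graph E w m r -> mutant_biased m r ->
  forall S T : {set V},
    fp w m r (S :|: T) + fp w m r (S :&: T) <= fp w m r S + fp w m r T.
Proof.
move=> [E_connected [w_edge_gt0 [w_nonedge [w_sum1 [r_gt0 _]]]]] r_le_m S T.
have [v0 _|V_empty] := pickP V.
  have w_ge0 u v : 0 <= w u v.
    by have [/w_edge_gt0/ltW|/w_nonedge->] := boolP (E u v).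
  exact: (fp_submodular w_ge0 w_sum1 r_gt0 r_le_m v0 w_edge_gt0 E_connected).
have all_set0 (X : {set V}) : X = set0 by apply/setP => x; have := V_empty x.
by rewrite (all_set0 (S :|: T)) (all_set0 (S :&: T)) (all_set0 S) (all_set0 T).
Qed.
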